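(* Fix a $d$-RSK growth diagram on a Young diagram $F$ and a lattice point $p$ of $F$ such that $\mathrm{Rect}_p$ contains no se-chain of length $d$. Then every cell of $\mathrm{Rect}_p$ satisfies the RSK local rule.
   Context: Partitions: finite weakly decreasing sequences of positive integers, $\lambda_i=0$ for $i>\ell(\lambda)$; $d$-partitions have $\ell\le d$; $\alpha\prec\beta$ (also $\beta\succ\alpha$) means $\beta_1\ge\alpha_1\ge\beta_2\ge\alpha_2\ge\cdots$. Young diagrams lie in the first quadrant with unit cells at integer lattice points, left-justified, rows stacked upward; lattice points are cell corners; a filling assigns nonnegative integers to cells. For a lattice point $p=(x,y)$, $\mathrm{Rect}_p$ is the rectangle $[0,x]\times[0,y]$ viewed as a Young diagram. A se-chain is a sequence of cells with nonzero entries, each strictly below and strictly to the right of the previous; its length is the number of cells. For a cell with entry $m$ and bottom-left, top-left, bottom-right, top-right corners $\kappa,\mu,\nu,\rho$: the RSK local rule requires $\mu\succ\kappa\prec\nu$, $\mu\prec\rho\succ\nu$, $\rho_1=m+\max(\mu_1,\nu_1)$, and $\rho_i+\kappa_{i-1}=\min(\mu_{i-1},\nu_{i-1})+\max(\mu_i,\nu_i)$ for all $i\ge2$. The $d$-RSK local rule requires all four to be $d$-partitions, $\mu\succ\kappa\prec\nu$, $\mu\prec\rho\succ\nu$, $m=0$ or $\kappa_d=0$, $\rho_1+\kappa_d=m+\min(\mu_d,\nu_d)+\max(\mu_1,\nu_1)$, and $\rho_i+\kappa_{i-1}=\min(\mu_{i-1},\nu_{i-1})+\max(\mu_i,\nu_i)$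 for $2\le i\le d$. A $d$-RSK growth diagram on $F$ is a filling plus a partition at each lattice point, with $\emptyset$ at all lattice points on the coordinate axes, every cell satisfying the $d$-RSK local rule. *)

From mathcomp Require Import all_boot.
Set Implicit Arguments. Unset Strict Implicit. Unset Printing Implicit Defensive.

Definition is_partition (l : seq nat) : bool :=
  sorted geq l && all (fun k => 0 < k) l.

(* 1-indexed parts: part l i = lambda_i (i >= 1); lambda_i = 0 for i > size l. *)
Definition part (l : seq nat) (i : nat) : nat := nth 0 l i.-1.

Definition is_dpartition (d : nat) (l : seq nat) : bool :=
  is_partition l && (size l <= d).

Definition interlace (alpha beta : seq nat) : Prop :=
  forall i, 1 <= i -> part alpha i <= part beta i /\ part beta i.+1 <= part alpha i.

(* RSK local rule for a cell with entry m and corners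
   kappa (bottom-left), mu (top-left), nu (bottom-right), rho (top-right). *)
Definition RSK_local (m : nat) (kappa mu nu rho : seq nat) : Prop :=
  [/\ interlace kappa mu /\ interlace kappa nu,
      interlace mu rho /\ interlace nu rho,
      part rho 1 = m + maxn (part mu 1) (part nu 1)
    & forall i, 2 <= i ->
        part rho i + part kappa i.-1 =
        minn (part mu i.-1) (part nu i.-1) + maxn (part mu i) (part nu i)].

Definition dRSK_local (d : nat) (m : nat) (kappa mu nu rho : seq nat) : Prop :=
  [/\ [&& is_dpartition d kappa, is_dpartition d mu, is_dpartition d nu
        & is_dpartition d rho],
      (interlace kappa mu /\ interlace kappa nu) /\
      (interlace mu rho /\ interlace nu rho),
      m = 0 \/ part kappa d = 0,
      part rho 1 + part kappa d =
        m + minn (part mu d) (part nu d) + maxn (part mu 1) (part nu 1)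
    & forall i, 2 <= i -> i <= d ->
        part rho i + part kappa i.-1 =
        minn (part mu i.-1) (part nu i.-1) + maxn (part mu i) (part nu i)].

(* A Young diagram is given by its row lengths F (a partition), rows stacked
   upward from row 0.  Cell (a,b) has bottom-left corner (a,b). *)
Definition in_diagram (F : seq nat) (c : nat * nat) : bool :=
  (c.2 < size F) && (c.1 < nth 0 F c.2).

(* Lattice points of F: corners of cells of F (and the origin). *)
Definition lattice_point (F : seq nat) (p : nat * nat) : bool :=
  (p.2 <= size F) && (p.1 <= nth 0 F p.2.-1).

Definition in_rect (p : nat * nat) (c : nat * nat) : bool :=
  (c.1 < p.1) && (c.2 < p.2).

(* d-RSK growth diagram on F: filling f (entry of cell (a,b) is f a b) and
   partition g x y at each lattice point (x,y). *)
Definition dRSK_growth (d : nat) (F : seq nat)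
    (f : nat -> nat -> nat) (g : nat -> nat -> seq nat) : Prop :=
  (forall x y, lattice_point F (x, y) -> (x == 0) || (y == 0) -> g x y = [::]) /\
  (forall a b, in_diagram F (a, b) ->
     dRSK_local d (f a b) (g a b) (g a b.+1) (g a.+1 b) (g a.+1 b.+1)).

Definition se_step (c c' : nat * nat) : bool := (c.1 < c'.1) && (c'.2 < c.2).

Definition se_chain_in_rect (f : nat -> nat -> nat) (p : nat * nat)
    (s : seq (nat * nat)) : Prop :=
  all (fun c => in_rect p c && (f c.1 c.2 != 0)) s /\ sorted se_step s.

From mathcomp Require Import all_boot.
From mathcomp Require Import zify.

Set Implicit Arguments. Unset Strict Implicit. Unset Printing Implicit Defensive.

(* Write L x y i for the i-th part of the partition at the lattice point
   (x, y).  Under the RSK rule, rows 2, 3, ... of a growth diagram form again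
   an RSK growth diagram, for the overflow filling min(mu_1, nu_1) - kappa_1.
   An overflow se-chain of length k lifts to an se-chain of length k + 1 of the
   original filling, because the first row can only grow across an edge of the
   diagram if some nonzero entry lies beyond that edge.  By induction on k,
   L U V k > 0 therefore forces an se-chain of length k in Rect_(U,V).
   Proceeding column by column, every cell of Rect_p to the left of a cell
   obeys the RSK rule; hence the top-left partition mu of that cell has
   mu_d = 0 (otherwise there is an se-chain of length d), and with mu_d = 0
   the d-RSK rule reduces to the RSK rule. *)

Definition rsk_rule (m : nat) (K M N R : nat -> nat) : Prop :=
  [/\ forall i, 0 < i -> K i <= M i /\ K i <= N i,
      R 1 = m + maxn (M 1) (N 1)
    & forall i, 1 < i -> R i + K i.-1 = minn (M i.-1) (N i.-1) + maxn (M i) (N i)].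

Definition rsk_growth (U V : nat) (f : nat -> nat -> nat)
    (L : nat -> nat -> nat -> nat) : Prop :=
  [/\ forall a b, a < U -> b < V ->
        rsk_rule (f a b) (L a b) (L a b.+1) (L a.+1 b) (L a.+1 b.+1),
      forall y i, y <= V -> L 0 y i = 0
    & forall x i, x <= U -> L x 0 i = 0].

Definition overflow (L : nat -> nat -> nat -> nat) (a b : nat) : nat :=
  minn (L a b.+1 1) (L a.+1 b 1) - L a b 1.

Lemma rsk_rule_sym m K M N R : rsk_rule m K M N R -> rsk_rule m K N M R.
Proof.
case=> KMN R1 Ri; split=> [i /KMN[]|| i /Ri] //; first by rewrite maxnC.
by rewrite minnC maxnC.
Qed.

Lemma rsk_rule_shift m K M N R : rsk_rule m K M N R ->
  rsk_rule (minn (M 1) (N 1) - K 1) (fun i => K i.+1) (fun i => M i.+1)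
    (fun i => N i.+1) (fun i => R i.+1).
Proof.
case=> KMN R1 Ri; split=> [i _|/=|[|i] // _]; [exact: KMN | | exact: Ri].
by have /= := Ri 2 isT; have := KMN 1 isT; lia.
Qed.

Lemma rsk_growth_transpose U V f L : rsk_growth U V f L ->
  rsk_growth V U (fun a b => f b a) (fun x y => L y x).
Proof.
case=> cells L0y Lx0; split=> [a b aV bU|y i yU|x i xV].
- exact/rsk_rule_sym/cells.
- exact: Lx0.
- exact: L0y.
Qed.

Lemma rsk_growth_shift U V f L : rsk_growth U V f L ->
  rsk_growth U V (overflow L) (fun x y i => L x y i.+1).
Proof.
case=> cells L0y Lx0; split=> [a b aU bV|y i yV|x i xU].
- exact: rsk_rule_shift (cells a b aU bV).
- exact: L0y.
- exact: Lx0.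
Qed.

Lemma overflow_neq0 L a b : overflow L a b != 0 ->
  L a b 1 < L a b.+1 1 /\ L a b 1 < L a.+1 b 1.
Proof. by rewrite /overflow; lia. Qed.

Lemma nondecreasing_upto (h : nat -> nat) n :
  (forall i, i < n -> h i <= h i.+1) -> forall i j, i <= j -> j <= n -> h i <= h j.
Proof.
move=> h_step i j ij jn.
apply: (@homo_leq_in _ [pred k | k <= n] h leq) => //.
- exact: leq_trans.
- by move=> a b _ bn k /andP[_ kb]; rewrite inE (leq_trans (ltnW kb)).
- by move=> k _; rewrite inE; exact: h_step.
- by rewrite inE (leq_trans ij).
Qed.

Lemma se_chain_cons2 f r p q t :
  se_chain_in_rect f r [:: p, q & t] <->
  [/\ in_rect r p, f p.1 p.2 != 0, se_step p q & se_chain_in_rect f r (q :: t)].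
Proof.
rewrite /se_chain_in_rect /=; split.
- by case=> /andP[/andP[-> ->] qt] /andP[-> st].
- by case=> -> -> -> [qt st]; rewrite qt.
Qed.

Lemma se_chain_in_rect_widen f u v u' v' s : u <= u' -> v <= v' ->
  se_chain_in_rect f (u, v) s -> se_chain_in_rect f (u', v') s.
Proof.
move=> uu' vv' [cells sorted_s]; split => //.
apply: sub_all cells => c /andP[/andP[c1 c2] ->].
by rewrite /in_rect (leq_trans c1 uu') (leq_trans c2 vv').
Qed.

Lemma first_row_le_right U V f L x y : rsk_growth U V f L ->
  x < U -> y <= V -> L x y 1 <= L x.+1 y 1.
Proof.
case=> cells _ Lx0; case: y => [|y] xU yV; first by rewrite !Lx0 // ltnW.
have [_ -> _] := cells x y xU yV.
exact: leq_trans (leq_maxl _ _) (leq_addl _ _).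
Qed.

Lemma row_witness U V f L a b T : rsk_growth U V f L ->
  a <= U -> b < V -> L a b 1 <= T -> T < L a b.+1 1 ->
  exists c, [/\ c < a, f c b != 0 & T < L c.+1 b.+1 1].
Proof.
case=> cells L0y _ + bV; elim: a => [|a IH] aU Tlo Thi.
  by rewrite L0y in Thi.
have [/(_ 1 isT) [_ KN] R1 _] := cells a b aU bV.
have [fab0 | ] := eqVneq (f a b) 0; last by exists a.
have Thi' : T < L a b.+1 1 by move: Thi; rewrite R1 fab0; lia.
have [c [ca fc Tc]] := IH (ltnW aU) (leq_trans KN Tlo) Thi'.
by exists c; split => //; exact: ltnW.
Qed.

Section GrowthDiagram.

Variables (U V : nat) (f : nat -> nat -> nat) (L : nat -> nat -> nat -> nat).
Hypothesis growthL : rsk_growth U V f L.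

Lemma first_row_le_up x y : x <= U -> y < V -> L x y 1 <= L x y.+1 1.
Proof. by move=> xU yV; have := first_row_le_right (rsk_growth_transpose growthL) yV xU. Qed.

Lemma first_row_monotone x y x' y' :
  x <= x' -> x' <= U -> y <= y' -> y' <= V -> L x y 1 <= L x' y' 1.
Proof.
move=> xx' x'U yy' y'V; apply: (@leq_trans (L x' y 1)).
- apply: (nondecreasing_upto (h := fun i => L i y 1) _ xx' x'U) => i iU.
  exact: first_row_le_right growthL iU (leq_trans yy' y'V).
- apply: (nondecreasing_upto (h := fun j => L x' j 1) _ yy' y'V) => j jV.
  exact: first_row_le_up.
Qed.

Lemma column_witness a b T : a < U -> b <= V -> L a b 1 <= T -> T < L a.+1 b 1 ->
  exists r, [/\ r < b, f a r != 0 & T < L a.+1 r.+1 1].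
Proof.
move=> aU bV Tlo Thi.
by have [r ?] := row_witness (rsk_growth_transpose growthL) bV aU Tlo Thi; exists r.
Qed.

Lemma exists_nonzero_cell v : v <= V -> 0 < L U v 1 ->
  exists a b, [/\ a < U, b < v & f a b != 0].
Proof.
case: growthL => _ _ Lx0; elim: v => [|v IH] vV; first by rewrite Lx0.
have [Lv0 pos | Lv_pos _] := posnP (L U v 1).
  have [c [cU fc _]] := row_witness growthL (leqnn U) vV (eq_leq Lv0) pos.
  by exists c, v.
by have [a [b [aU bv fab]]] := IH (ltnW vV) Lv_pos; exists a, b; split => //; exact: ltnW.
Qed.

Lemma next_chain_cell (p : nat * nat) x1 y1 x2 y2 :
  x2 < U -> y1 < V -> x1 < x2 -> y2 < y1 ->
  overflow L x1 y1 != 0 -> overflow L x2 y2 != 0 -> p.1 < x1 -> y1 <= p.2 ->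
  exists q, [/\ in_rect (U, V) q, f q.1 q.2 != 0, se_step p q, q.1 < x2 & y2 <= q.2].
Proof.
move=> x2U y1V x12 y21 /overflow_neq0[_ jump1] /overflow_neq0[jump2 _] px1 py1.
have [r [ry1 fr Tr]] := column_witness (ltn_trans x12 x2U) (ltnW y1V) (leqnn _) jump1.
have [y2r | ry2] := leqP y2 r.
  by exists (x1, r); split; rewrite /in_rect /se_step //=; lia.
have [c [cx2 fc Tc]] := row_witness growthL (ltnW x2U) (ltn_trans y21 y1V) (leqnn _) jump2.
have pc : p.1 < c.
  rewrite ltnNge; apply/negP => cp.
  have := first_row_monotone (x := c.+1) (y := y2.+1) (x' := x1) (y' := y1).
  have := first_row_monotone (x := x1.+1) (y := r.+1) (x' := x2) (y' := y2).
  lia.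
by exists (c, y2); split; rewrite /in_rect /se_step //=; lia.
Qed.

Lemma lift_overflow_chain s1 s p :
  se_chain_in_rect (overflow L) (U, V) (s1 :: s) ->
  in_rect (U, V) p -> f p.1 p.2 != 0 -> p.1 < s1.1 -> s1.2 <= p.2 ->
  exists t, se_chain_in_rect f (U, V) (p :: t) /\ size t = (size s).+1.
Proof.
elim: s s1 p => [|[x2 y2] s IH] [x1 y1] p /=.
  case=> /= /andP[/andP[/andP[/= x1U y1V] /overflow_neq0[_ jump]] _] _ pR fp px1 py1.
  have [r [ry1 fr _]] := column_witness x1U (ltnW y1V) (leqnn _) jump.
  exists [:: (x1, r)]; split => //; apply/se_chain_cons2; split => //.
  - by rewrite /se_step /=; lia.
  - by split; rewrite //= /in_rect /= fr x1U (ltn_trans ry1 y1V).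
move=> /se_chain_cons2[/andP[/= x1U y1V] o1 /andP[/= x12 y21] chain2] pR fp px1 py1.
have [/andP[/= x2U y2V] o2] : in_rect (U, V) (x2, y2) /\ overflow L x2 y2 != 0.
  by case: chain2 => /= /andP[/andP[-> ->] _].
have [q [qR fq pq qx2 y2q]] := next_chain_cell x2U y1V x12 y21 o1 o2 px1 py1.
have [t [chain_qt size_t]] := IH (x2, y2) q chain2 qR fq qx2 y2q.
by exists (q :: t); split; [exact/se_chain_cons2 | rewrite /= size_t].
Qed.

End GrowthDiagram.

Lemma se_chain_of_part k U V f L : rsk_growth U V f L -> 0 < L U V k.+1 ->
  exists s, se_chain_in_rect f (U, V) s /\ size s = k.+1.
Proof.
elim: k U V f L => [|k IH] U V f L growthL pos.
  have [a [b [aU bV fab]]] := exists_nonzero_cell growthL (leqnn V) pos.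
  by exists [:: (a, b)]; split => //; split; rewrite //= /in_rect /= aU bV fab.
have [s [chain size_s]] := IH U V _ _ (rsk_growth_shift growthL) pos.
case: s chain size_s => [//|[x1 y1] s] chain size_s.
case: (chain) => /= /andP[/andP[/andP[/= x1U y1V] /overflow_neq0[jump _]] _] _.
have [c [cx1 fc _]] := row_witness growthL (ltnW x1U) y1V (leqnn _) jump.
have cR : in_rect (U, V) (c, y1) by rewrite /in_rect /= y1V (ltn_trans cx1 x1U).
have [t [chain_t size_t]] := lift_overflow_chain growthL chain cR fc cx1 (leqnn _).
by exists ((c, y1) :: t); split; rewrite //= size_t -size_s.
Qed.

Lemma dpartition_part_eq0 d l i : is_dpartition d l -> d < i -> part l i = 0.
Proof. by case/andP=> _ size_l di; rewrite /part nth_default //; lia. Qed.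

Lemma rsk_rule_of_RSK_local m kappa mu nu rho :
  RSK_local m kappa mu nu rho ->
  rsk_rule m (part kappa) (part mu) (part nu) (part rho).
Proof.
case=> [[km kn] _ R1 Ri]; split=> // i i0.
by split; [exact: (km i i0).1 | exact: (kn i i0).1].
Qed.

Lemma RSK_local_of_dRSK_local d m kappa mu nu rho : 0 < d ->
  dRSK_local d m kappa mu nu rho -> part mu d = 0 -> RSK_local m kappa mu nu rho.
Proof.
move=> d0 [/and4P[dk dm dn dr] [[km kn] [mr nr]] _ R1 Ri] mu0.
have kappa0 : part kappa d = 0 by have := (km d d0).1; lia.
split; [by split | by split | by move: R1; rewrite kappa0 mu0; lia |].
move=> i i2; have [id | di] := leqP i d; first exact: Ri.
rewrite !(dpartition_part_eq0 _ di) //.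
have [di1 | ->] : d < i.-1 \/ i.-1 = d by lia.
- by rewrite !(dpartition_part_eq0 _ di1).
- by rewrite kappa0 mu0 min0n.
Qed.

Lemma RSK_local_in_rect d x y f g :
  (forall a b, a < x -> b < y ->
     dRSK_local d (f a b) (g a b) (g a b.+1) (g a.+1 b) (g a.+1 b.+1)) ->
  (forall b, b <= y -> g 0 b = [::]) -> (forall a, a <= x -> g a 0 = [::]) ->
  ~ (exists s, se_chain_in_rect f (x, y) s /\ size s = d) ->
  forall a b, a < x -> b < y ->
    RSK_local (f a b) (g a b) (g a b.+1) (g a.+1 b) (g a.+1 b.+1).
Proof.
move=> dRSK g0y gx0 no_chain.
case: d dRSK no_chain => [|d] dRSK no_chain; first by case: no_chain; exists [::].
elim/ltn_ind => a IH b lt_ax lt_by.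
have growth : rsk_growth a b.+1 f (fun x y => part (g x y)).
  split=> [a' b' lt_a'a lt_b'b | y' i le_y'b | x' i le_x'a].
  - apply/rsk_rule_of_RSK_local/IH => //.
    + exact: ltn_trans lt_a'a lt_ax.
    + exact: leq_ltn_trans (ltnSE lt_b'b) lt_by.
  - by rewrite g0y ?(leq_trans le_y'b lt_by) // /part nth_nil.
  - by rewrite gx0 ?(leq_trans le_x'a (ltnW lt_ax)) // /part nth_nil.
have mu0 : part (g a b.+1) d.+1 = 0.
  have [//|pos] := posnP (part (g a b.+1) d.+1).
  have [s [chain size_s]] := se_chain_of_part growth pos.
  case: no_chain; exists s; split => //.
  exact: se_chain_in_rect_widen (ltnW lt_ax) lt_by chain.
exact: RSK_local_of_dRSK_local (dRSK a b lt_ax lt_by) mu0.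
Qed.

Lemma partition_nth_nonincreasing F i j : is_partition F -> i <= j ->
  nth 0 F j <= nth 0 F i.
Proof.
case/andP=> sorted_F _ ij; have [jF | Fj] := ltnP j (size F); last by rewrite nth_default.
have geq_trans : transitive geq by move=> m n p /= nm pn; exact: leq_trans pn nm.
apply: (sorted_leq_nth geq_trans leqnn 0 sorted_F) => //; rewrite ?inE /=; lia.
Qed.

Lemma lattice_point_le F x y a b : is_partition F -> lattice_point F (x, y) ->
  a <= x -> b <= y -> lattice_point F (a, b).
Proof.
move=> partF /andP[/= yF xF] le_ax le_by; rewrite /lattice_point /= (leq_trans le_by yF).
by rewrite (leq_trans le_ax (leq_trans xF _)) // partition_nth_nonincreasing //; lia.
Qed.

Theorem lemma5p2 (d : nat) (F : seq nat) (f : nat -> nat -> nat)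
    (g : nat -> nat -> seq nat) (x y : nat) :
  is_partition F ->
  dRSK_growth d F f g ->
  lattice_point F (x, y) ->
  ~ (exists s : seq (nat * nat), se_chain_in_rect f (x, y) s /\ size s = d) ->
  forall a b, a < x -> b < y ->
    RSK_local (f a b) (g a b) (g a b.+1) (g a.+1 b) (g a.+1 b.+1).
Proof.
move=> partF [axes cells] pxy no_chain.
apply: RSK_local_in_rect no_chain => [a b lt_ax lt_by | b le_by | a le_ax].
- (* in_diagram F (a, b) is convertible to lattice_point F (a.+1, b.+1). *)
  exact/cells/(lattice_point_le partF pxy lt_ax lt_by).
- by apply: axes; first exact: lattice_point_le partF pxy (leq0n x) le_by.
- by apply: axes; first exact: lattice_point_le partF pxy le_ax (leq0n y); rewrite orbT.
Qed.
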